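(* Let $\Omega=\mathbb N$, $\Sigma=2^{\mathbb N}$ and $\mu$ a finite measure with $\mu(\{n\})>0$ for all $n$. Let $X(\mu)$ be a Banach rectangular sequence space containing every canonical sequence $e_n$ ($e_n(k)=1$ if $k=n$ and $0$ otherwise), and let $X_0$ be the closure in $X(\mu)$ of $\operatorname{span}\{e_n:n\in\mathbb N\}$. Then $\{e_n\}$ is an unconditional basis for $X_0$.
   Context: A Banach rectangular sequence space is a vector space $X(\mu)$ of real sequences with a complete norm such that for some $C>0$, $\chi_Af\in X(\mu)$ and $\|\chi_Af\|\le C\|f\|$ for all $f\in X(\mu)$, $A\subseteq\mathbb N$. An unconditional basis of $X_0$ is a Schauder basis $\{x_n\}$ (each $x\in X_0$ is uniquely $\sum a_nx_n$) such that for each $x=\sum a_nx_n$ the series $\sum a_{\pi(n)}x_{\pi(n)}$ converges for every permutation $\pi$ of $\mathbb N$. *)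

From Stdlib Require Import Reals ClassicalEpsilon.
Open Scope R_scope.

Definition rseq := nat -> R.

Definition seq_add (f g : rseq) : rseq := fun k => f k + g k.
Definition seq_scale (a : R) (f : rseq) : rseq := fun k => a * f k.
Definition seq_sub (f g : rseq) : rseq := fun k => f k - g k.
Definition seq_zero : rseq := fun _ => 0.

Definition chi (A : nat -> Prop) (f : rseq) : rseq :=
  fun k => if excluded_middle_informative (A k) then f k else 0.

Definition norm_conv (nrm : rseq -> R) (u : nat -> rseq) (x : rseq) : Prop :=
  forall eps, 0 < eps -> exists N, forall n, (N <= n)%nat -> nrm (seq_sub (u n) x) < eps.

Definition norm_cauchy (nrm : rseq -> R) (u : nat -> rseq) : Prop :=
  forall eps, 0 < eps -> exists N, forall n m, (N <= n)%nat -> (N <= m)%nat ->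
    nrm (seq_sub (u n) (u m)) < eps.

Definition banach_seq_space (X : rseq -> Prop) (nrm : rseq -> R) : Prop :=
  X seq_zero /\
  (forall f g, X f -> X g -> X (seq_add f g)) /\
  (forall a f, X f -> X (seq_scale a f)) /\
  (forall f, X f -> 0 <= nrm f) /\
  (forall f, X f -> nrm f = 0 -> f = seq_zero) /\
  (forall a f, X f -> nrm (seq_scale a f) = Rabs a * nrm f) /\
  (forall f g, X f -> X g -> nrm (seq_add f g) <= nrm f + nrm g) /\
  (forall u : nat -> rseq, (forall n, X (u n)) -> norm_cauchy nrm u ->
     exists x, X x /\ norm_conv nrm u x).

Definition banach_rectangular_seq_space (X : rseq -> Prop) (nrm : rseq -> R) : Prop :=
  banach_seq_space X nrm /\
  exists C, 0 < C /\
    forall f (A : nat -> Prop), X f -> X (chi A f) /\ nrm (chi A f) <= C * nrm f.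

Definition e (n : nat) : rseq := fun k => if Nat.eqb k n then 1 else 0.

Fixpoint psum (a : nat -> R) (b : nat -> rseq) (N : nat) : rseq :=
  match N with
  | O => seq_zero
  | S N' => seq_add (psum a b N') (seq_scale (a N') (b N'))
  end.

Definition span (b : nat -> rseq) (f : rseq) : Prop :=
  exists (N : nat) (a : nat -> R), f = psum a b N.

Definition closure_in (X : rseq -> Prop) (nrm : rseq -> R) (S : rseq -> Prop)
  (f : rseq) : Prop :=
  X f /\ forall eps, 0 < eps -> exists g, S g /\ nrm (seq_sub f g) < eps.

Definition series_conv (nrm : rseq -> R) (a : nat -> R) (b : nat -> rseq) (x : rseq) :=
  norm_conv nrm (psum a b) x.

Definition is_permutation (p : nat -> nat) : Prop :=
  exists q : nat -> nat, (forall n, q (p n) = n) /\ (forall n, p (q n) = n).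

Definition schauder_basis (X0 : rseq -> Prop) (nrm : rseq -> R) (b : nat -> rseq) : Prop :=
  (forall n, X0 (b n)) /\
  (forall x, X0 x -> exists! a : nat -> R, series_conv nrm a b x).

Definition unconditional_basis (X0 : rseq -> Prop) (nrm : rseq -> R) (b : nat -> rseq) : Prop :=
  schauder_basis X0 nrm b /\
  (forall x (a : nat -> R), X0 x -> series_conv nrm a b x ->
     forall p, is_permutation p ->
       exists y, X0 y /\ series_conv nrm (fun n => a (p n)) (fun n => b (p n)) y).

From Stdlib Require Import Reals Lra Lia FunctionalExtensionality ClassicalEpsilon FinFun.
Open Scope R_scope.

(* Rectangularity with constant C makes every coordinate functional bounded,
   |f n| nrm (e n) <= C nrm f, so the coefficients of any expansion of x in
   the e_n are the entries of x itself.  It also bounds the part of x living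
   on a set B of indices beyond the support of a finitely supported g by
   C nrm (x - g). *)

Definition image_below (p : nat -> nat) (N k : nat) : Prop :=
  exists j, (j < N)%nat /\ p j = k.

Lemma image_below_S p N k :
  image_below p (S N) k <-> image_below p N k \/ p N = k.
Proof.
  split.
  - intros [j [Hj <-]].
    destruct (Nat.eq_dec j N) as [->|Hne]; [now right|].
    left; exists j; split; [lia|reflexivity].
  - intros [[j [Hj <-]]|<-]; [exists j|exists N]; split; auto; lia.
Qed.

Lemma chi_ext (A B : nat -> Prop) f :
  (forall k, A k <-> B k) -> chi A f = chi B f.
Proof.
  intros HAB; apply functional_extensionality; intro k; unfold chi.
  specialize (HAB k).
  destruct (excluded_middle_informative (A k)),
    (excluded_middle_informative (B k)); tauto.
Qed.

Lemma psum_comp_e f p :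
  Injective p -> forall N,
  psum (fun n => f (p n)) (fun n => e (p n)) N = chi (image_below p N) f.
Proof.
  intros Hp N; induction N as [|N IH];
    apply functional_extensionality; intro k;
    simpl; unfold chi, seq_zero, seq_add, seq_scale.
  - destruct excluded_middle_informative as [[j [Hj _]]|_]; [lia|reflexivity].
  - rewrite IH; unfold chi, e.
    destruct (Nat.eqb_spec k (p N)) as [->|Hk].
    + destruct (excluded_middle_informative (image_below p N (p N)))
        as [[j [Hj Hpj]]|_]; [apply Hp in Hpj; lia|].
      destruct excluded_middle_informative as [_|Hout]; [ring|].
      exfalso; apply Hout, image_below_S; now right.
    + destruct (excluded_middle_informative (image_below p N k)) as [Hin|Hout],
        (excluded_middle_informative (image_below p (S N) k)) as [Hin'|Hout'];
        try ring.
      * exfalso; apply Hout', image_below_S; now left.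
      * apply image_below_S in Hin' as [Hin'|Hin']; [contradiction|congruence].
Qed.

Lemma psum_e f N : psum f e N = chi (fun k => (k < N)%nat) f.
Proof.
  change (psum (fun n => f n) (fun n => e n) N = chi (fun k => (k < N)%nat) f).
  rewrite (psum_comp_e f (fun n => n)) by (intros i j; auto).
  apply chi_ext; intro k; split.
  - now intros [j [Hj <-]].
  - intro Hk; now exists k.
Qed.

Lemma e_as_psum n : e n = psum (e n) e (S n).
Proof.
  rewrite psum_e; apply functional_extensionality; intro k; unfold chi, e.
  destruct excluded_middle_informative; [reflexivity|].
  destruct (Nat.eqb_spec k n); [lia|reflexivity].
Qed.

Lemma is_permutation_id : is_permutation (fun n => n).
Proof. now exists (fun n => n). Qed.

Lemma is_permutation_injective p : is_permutation p -> Injective p.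
Proof.
  intros [q [Hqp _]] i j Hij.
  now rewrite <- (Hqp i), <- (Hqp j), Hij.
Qed.

Lemma is_permutation_covers p :
  is_permutation p ->
  forall M, exists N0, forall k, (k < M)%nat -> image_below p N0 k.
Proof.
  intros [q [_ Hpq]] M; induction M as [|M [N0 HN0]].
  - exists 0%nat; intros k Hk; lia.
  - exists (max N0 (S (q M))); intros k Hk.
    destruct (Nat.eq_dec k M) as [->|Hne].
    + exists (q M); split; [lia|apply Hpq].
    + destruct (HN0 k ltac:(lia)) as [j [Hj Hpj]].
      exists j; split; [lia|assumption].
Qed.

Lemma Rmult_lt_of_lt_div c a b : 0 < c -> a < b / c -> c * a < b.
Proof.
  intros Hc Hab; apply Rmult_lt_compat_l with (r := c) in Hab; [|assumption].
  rewrite Rmult_div_assoc, Rmult_div_r in Hab by lra; exact Hab.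
Qed.

Section RectangularSequenceSpace.

Variables (X : rseq -> Prop) (nrm : rseq -> R) (C : R).

Hypothesis X_zero : X seq_zero.
Hypothesis X_add : forall f g, X f -> X g -> X (seq_add f g).
Hypothesis X_scale : forall a f, X f -> X (seq_scale a f).
Hypothesis nrm_ge0 : forall f, X f -> 0 <= nrm f.
Hypothesis nrm_eq0 : forall f, X f -> nrm f = 0 -> f = seq_zero.
Hypothesis nrm_scale : forall a f, X f -> nrm (seq_scale a f) = Rabs a * nrm f.
Hypothesis C_gt0 : 0 < C.
Hypothesis chi_bounded :
  forall f (A : nat -> Prop), X f -> X (chi A f) /\ nrm (chi A f) <= C * nrm f.
Hypothesis X_e : forall n, X (e n).

Let X0 := closure_in X nrm (span e).

Lemma X_sub f g : X f -> X g -> X (seq_sub f g).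
Proof.
  intros Hf Hg.
  replace (seq_sub f g) with (seq_add f (seq_scale (-1) g)) by
    (apply functional_extensionality; intro k;
     unfold seq_sub, seq_add, seq_scale; ring).
  auto.
Qed.

Lemma X_psum_e a N : X (psum a e N).
Proof. induction N; simpl; auto. Qed.

Lemma nrm_opp f : X f -> nrm (seq_scale (-1) f) = nrm f.
Proof.
  intro Hf; rewrite nrm_scale, Rabs_left by (assumption || lra); ring.
Qed.

Lemma nrm_sub_diag f : X f -> nrm (seq_sub f f) = 0.
Proof.
  intro Hf.
  replace (seq_sub f f) with (seq_scale 0 f) by
    (apply functional_extensionality; intro k; unfold seq_sub, seq_scale; ring).
  rewrite nrm_scale, Rabs_R0 by assumption; ring.
Qed.

Lemma nrm_e_gt0 n : 0 < nrm (e n).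
Proof.
  destruct (nrm_ge0 (e n) (X_e n)) as [|Hzero]; [assumption|exfalso].
  apply eq_sym, nrm_eq0, (f_equal (fun f => f n)) in Hzero; [|apply X_e].
  unfold e, seq_zero in Hzero; rewrite Nat.eqb_refl in Hzero; lra.
Qed.

Lemma psum_e_in_closure a N : X0 (psum a e N).
Proof.
  split; [apply X_psum_e|].
  intros eps Heps; exists (psum a e N); split.
  - now exists N, a.
  - rewrite nrm_sub_diag by apply X_psum_e; assumption.
Qed.

Lemma coordinate_bound f n : X f -> Rabs (f n) * nrm (e n) <= C * nrm f.
Proof.
  intro Hf.
  assert (Hproj : chi (fun k => k = n) f = seq_scale (f n) (e n)).
  { apply functional_extensionality; intro k; unfold chi, seq_scale, e.
    destruct excluded_middle_informative as [->|Hk].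
    - rewrite Nat.eqb_refl; ring.
    - destruct (Nat.eqb_spec k n); [contradiction|ring]. }
  rewrite <- nrm_scale, <- Hproj by apply X_e.
  apply (chi_bounded _ _ Hf).
Qed.

Lemma expansion_coeffs_unique a x : X x -> series_conv nrm a e x -> a = x.
Proof.
  intros Hx Hconv; apply functional_extensionality; intro n.
  destruct (Req_dec (a n) (x n)) as [|Hne]; [assumption|exfalso].
  set (d := Rabs (a n - x n) * nrm (e n)).
  assert (Hd : 0 < d).
  { apply Rmult_lt_0_compat; [apply Rabs_pos_lt; lra|apply nrm_e_gt0]. }
  destruct (Hconv (d / C)) as [N HN]; [now apply Rdiv_lt_0_compat|].
  set (m := max N (S n)).
  specialize (HN m (Nat.le_max_l _ _)).
  assert (Hentry : seq_sub (psum a e m) x n = a n - x n).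
  { unfold seq_sub; rewrite psum_e; unfold chi.
    destruct excluded_middle_informative; [reflexivity|unfold m in *; lia]. }
  pose proof (coordinate_bound (seq_sub (psum a e m) x) n) as Hbound.
  rewrite Hentry in Hbound.
  specialize (Hbound (X_sub _ _ (X_psum_e a m) Hx)).
  pose proof (Rmult_lt_of_lt_div _ _ _ C_gt0 HN).
  fold d in Hbound; lra.
Qed.

Lemma closure_tail_small x :
  X0 x -> forall eps, 0 < eps ->
  exists M, forall B : nat -> Prop,
    (forall k, B k -> (M <= k)%nat) -> nrm (chi B x) < eps.
Proof.
  intros [Hx Hcl] eps Heps.
  destruct (Hcl (eps / C)) as [g [[M [b ->]] Hxg]];
    [now apply Rdiv_lt_0_compat|].
  exists M; intros B HB.
  assert (Hchi : chi B x = chi B (seq_sub x (psum b e M))).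
  { apply functional_extensionality; intro k; unfold chi, seq_sub.
    rewrite psum_e; unfold chi.
    destruct (excluded_middle_informative (B k)) as [Hk|]; [|reflexivity].
    destruct excluded_middle_informative; [specialize (HB k Hk); lia|ring]. }
  rewrite Hchi.
  destruct (chi_bounded (seq_sub x (psum b e M)) B) as [_ Hle];
    [apply X_sub; [assumption|apply X_psum_e]|].
  apply (Rle_lt_trans _ _ _ Hle), Rmult_lt_of_lt_div; assumption.
Qed.

Lemma rearranged_expansion_conv x p :
  X0 x -> is_permutation p ->
  series_conv nrm (fun n => x (p n)) (fun n => e (p n)) x.
Proof.
  intros Hx Hp eps Heps.
  destruct (closure_tail_small x Hx eps Heps) as [M HM].
  destruct (is_permutation_covers p Hp M) as [N0 HN0].
  exists N0; intros N HN.
  assert (Hdiff : seq_sub (psum (fun n => x (p n)) (fun n => e (p n)) N) x =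
                  seq_scale (-1) (chi (fun k => ~ image_below p N k) x)).
  { rewrite psum_comp_e by now apply is_permutation_injective.
    apply functional_extensionality; intro k; unfold seq_sub, seq_scale, chi.
    destruct (excluded_middle_informative (image_below p N k)),
      (excluded_middle_informative (~ image_below p N k)); try tauto; ring. }
  rewrite Hdiff, nrm_opp by now apply chi_bounded, Hx.
  apply HM; intros k Hk.
  destruct (Compare_dec.le_lt_dec M k) as [|Hlt]; [assumption|exfalso].
  apply Hk; destruct (HN0 k Hlt) as [j [Hj Hpj]].
  exists j; split; [lia|assumption].
Qed.

Lemma e_unconditional_basis : unconditional_basis X0 nrm e.
Proof.
  split; [split|].
  - intro n; rewrite e_as_psum; apply psum_e_in_closure.
  - intros x Hx; exists x; split.
    + exact (rearranged_expansion_conv x _ Hx is_permutation_id).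
    + intros a Ha; symmetry; apply expansion_coeffs_unique; [apply Hx|assumption].
  - intros x a Hx Ha p Hp; exists x; split; [assumption|].
    rewrite (expansion_coeffs_unique a x (proj1 Hx) Ha).
    now apply rearranged_expansion_conv.
Qed.

End RectangularSequenceSpace.

Theorem proposition4p7 (X : rseq -> Prop) (nrm : rseq -> R) :
  banach_rectangular_seq_space X nrm ->
  (forall n, X (e n)) ->
  unconditional_basis (closure_in X nrm (span e)) nrm e.
Proof.
  intros [[X_zero [X_add [X_scale [nrm_ge0 [nrm_eq0 [nrm_scale _]]]]]]
          [C [C_gt0 chi_bounded]]] X_e.
  now apply (e_unconditional_basis X nrm C).
Qed.
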